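(* Let $i\ge1$ and $n=4i$. Every ceiling coalition of the $i$-bit roof game $G_{i\text{-bit}}$ on players $\{1,\dots,n\}$ has at most two distinct direct left-shifts.
   Context: Players are $N=\{1,\dots,n\}$, $n=4i$. A coalition $S'$ is a direct left-shift of $S$ if there is $m\in S$, $2\le m\le n$, $m-1\notin S$, with $S'=(S\setminus\{m\})\cup\{m-1\}$; a left-shift of $S$ is obtained by one or more successive direct left-shifts. For $k\in\{0,\dots,2^i-1\}$ with $i$-bit binary representation $b_1\cdots b_i$, $S_{k,i}=\bigcup_{j=1}^iB_j$ where $B_j=\{4(j-1)+2,4(j-1)+3\}$ if $b_j=0$ and $B_j=\{4(j-1)+1,4(j-1)+4\}$ if $b_j=1$. The $i$-bit roof game $G_{i\text{-bit}}$ is the simple game on $N$ in which a coalition is winning iff it contains some $S_{k,i}$ or a left-shift of some $S_{k,i}$ (a canonical linear game whose roof coalitions are exactly the $S_{k,i}$). A maximal losing coalition is a losing $S$ with $S\cup\{m\}$ winning for all $m\notin S$; a ceiling coalition is a maximal losing coalition all of whose left-shifts are winning. *)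

(* Players 1..n are represented by ordinals p : 'I_n,
   the ordinal p standing for player p+1. Coalitions are {set 'I_n}. *)
From mathcomp Require Import all_boot.
Set Implicit Arguments. Unset Strict Implicit. Unset Printing Implicit Defensive.

Section Roof.
Variable n : nat.

Definition direct_left_shift (S S' : {set 'I_n}) : bool :=
  [exists m : 'I_n, exists m' : 'I_n,
     [&& m'.+1 == m :> nat, m \in S, m' \notin S & S' == m' |: (S :\ m)]].

Definition left_shift (S S' : {set 'I_n}) : bool :=
  [exists T, direct_left_shift S T && connect direct_left_shift T S'].
End Roof.

(* Bit b_j (j = 1..i) of the i-bit binary representation b_1...b_i of k
   (b_1 most significant); here indexed by j0 = j-1 in 0..i-1. *)
Definition bitj (i k j0 : nat) : bool := odd (k %/ 2 ^ (i - j0.+1)).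

(* Block B_j, j = j0+1: players {4(j-1)+2, 4(j-1)+3} if b_j = 0 and
   {4(j-1)+1, 4(j-1)+4} if b_j = 1; as ordinals (player - 1). *)
Definition block (i k j0 : nat) : {set 'I_(4 * i)} :=
  [set p : 'I_(4 * i) | (p : nat) \in
     (if bitj i k j0 then [:: 4 * j0; 4 * j0 + 3]
                     else [:: 4 * j0 + 1; 4 * j0 + 2])].

Definition roof (i k : nat) : {set 'I_(4 * i)} := \bigcup_(j0 < i) block i k j0.

Definition winning (i : nat) (S : {set 'I_(4 * i)}) : bool :=
  [exists k : 'I_(2 ^ i), exists T : {set 'I_(4 * i)},
     ((T == roof i k) || left_shift (roof i k) T) && (T \subset S)].

Definition maximal_losing (i : nat) (S : {set 'I_(4 * i)}) : bool :=
  ~~ winning S && [forall m : 'I_(4 * i), (m \notin S) ==> winning (m |: S)].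

Definition ceiling (i : nat) (S : {set 'I_(4 * i)}) : bool :=
  maximal_losing S && [forall S' : {set 'I_(4 * i)}, left_shift S S' ==> winning S'].

From mathcomp Require Import all_boot.
From mathcomp Require Import zify.
Set Implicit Arguments. Unset Strict Implicit. Unset Printing Implicit Defensive.

(* Compare coalitions through their prefix counts [prefix_card A t], the number
   of members of [A] below [t].  [B] is [A] or a left-shift of [A] exactly when
   the counts of [A] are pointwise below those of [B] and both coalitions have
   the same size (shift repeatedly at the first place where [A] falls behind),
   so a coalition is winning iff its counts dominate those of some roof.  A
   direct left-shift at [a] raises the count at [a] only.  Hence, for a ceiling
   [S], every direct left-shift at [a] makes the counts of [S] plus the indicator
   of [a] dominate a roof.  If the count of [S] falls below [2 j] at a block
   boundary [4 j], this forces [a = 4 j]; if on some block [j] the counts of [S]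
   dominate neither of the two roof profiles, it forces [a] into
   [{4 j + 1, 4 j + 3}]; otherwise choosing every bit by a dominated profile
   shows that [S] itself is winning, which a ceiling is not. *)

Section PrefixCard.
Variable n : nat.
Implicit Types A B C R T : {set 'I_n}.

Definition mem_nat A (t : nat) : bool :=
  if insub t is Some x then x \in A else false.

Definition prefix_card A (t : nat) : nat := \sum_(x < t) mem_nat A x.

Definition dominated A B : Prop := forall t, prefix_card A t <= prefix_card B t.

Lemma mem_nat_ord A (x : 'I_n) : mem_nat A x = (x \in A).
Proof. by rewrite /mem_nat valK. Qed.

Lemma mem_nat_out A t : n <= t -> mem_nat A t = false.
Proof. by move=> le_nt; rewrite /mem_nat insubF // ltnNge le_nt. Qed.

Lemma prefix_card0 A : prefix_card A 0 = 0.
Proof. by rewrite /prefix_card big_ord0. Qed.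

Lemma prefix_cardS A t : prefix_card A t.+1 = prefix_card A t + mem_nat A t.
Proof. by rewrite /prefix_card big_ord_recr. Qed.

Lemma prefix_cardS_le A t : prefix_card A t.+1 <= (prefix_card A t).+1.
Proof. by rewrite prefix_cardS -addn1 leq_add2l leq_b1. Qed.

Lemma leq_prefix_card A u v : u <= v -> prefix_card A u <= prefix_card A v.
Proof.
move/subnK <-; elim: (v - u) => // d IH.
by rewrite addSn prefix_cardS (leq_trans IH) ?leq_addr.
Qed.

Lemma prefix_card_out A t : n <= t -> prefix_card A t = prefix_card A n.
Proof.
move/subnK <-; elim: (t - n) => // d IH.
by rewrite addSn prefix_cardS mem_nat_out ?leq_addl // addn0.
Qed.

Lemma leq_prefix_card_total A t : prefix_card A t <= prefix_card A n.
Proof.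
by case: (leqP t n) => [/leq_prefix_card // | /ltnW/prefix_card_out ->].
Qed.

Lemma subset_prefix_card A B t : A \subset B -> prefix_card A t <= prefix_card B t.
Proof.
move/subsetP => sAB; apply: leq_sum => x _; rewrite /mem_nat.
by case: insub => // y; case: (boolP (y \in A)) => // /sAB ->.
Qed.

Lemma prefix_card_neq A B : A != B -> exists t, prefix_card A t != prefix_card B t.
Proof.
move=> neqAB; have [x neq_x] : exists x, (x \in A) != (x \in B).
  apply/existsP; apply: contraNT neqAB => /existsPn eqAB.
  by apply/eqP/setP => x; move: (eqAB x); rewrite negbK => /eqP.
have [eq_x|] := eqVneq (prefix_card A x) (prefix_card B x); last by exists x.
exists x.+1; rewrite !prefix_cardS eq_x eqn_add2l !mem_nat_ord.
by move: neq_x; case: (x \in A); case: (x \in B).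
Qed.

Lemma prefix_card_gap A u v : prefix_card A u < prefix_card A v ->
  exists2 x, u <= x < v & mem_nat A x.
Proof.
elim: v => [|v IH]; first by rewrite prefix_card0.
have widen x : u <= x < v -> u <= x < v.+1 by case/andP => -> /ltnW.
rewrite prefix_cardS; case: (boolP (mem_nat A v)) => Av; last first.
  by rewrite addn0 => /IH [x /widen]; exists x.
case: (ltnP (prefix_card A u) (prefix_card A v)) => [/IH [x /widen] | _ lt_u].
  by exists x.
exists v; rewrite // ltnSn andbT leqNgt.
apply: contraTN lt_u => /leq_prefix_card le_u; rewrite -leqNgt.
by move: (le_u A); rewrite prefix_cardS Av.
Qed.

Lemma prefix_card_flat A u v : u <= v -> (forall x, u <= x < v -> ~~ mem_nat A x) ->
  prefix_card A v = prefix_card A u.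
Proof.
move/subnK <-; elim: (v - u) => // d IH notA.
rewrite addSn prefix_cardS (negbTE (notA _ _)) ?addn0; last by rewrite leq_addl /=.
by apply: IH => x /andP[le_ux lt_x]; apply: notA; rewrite le_ux ltnS ltnW.
Qed.

(* A direct left-shift when [0 < a], [a] is in [A] and [a.-1] is not. *)
Definition shift_at A (a : nat) : {set 'I_n} :=
  [set x | ((x \in A) && (val x != a)) || (val x == a.-1)].

Lemma shift_atE A (m m' : 'I_n) : m'.+1 = m -> shift_at A m = m' |: (A :\ m).
Proof.
by move=> Sm'; apply/setP => x; rewrite !inE -!val_eqE /= -Sm' orbC andbC.
Qed.

Lemma mem_nat_shift_at A a t : 0 < a < n ->
  mem_nat (shift_at A a) t = (t != a) && ((t == a.-1) || mem_nat A t).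
Proof.
case/andP => a_gt0 lt_an; rewrite /mem_nat; case: insubP => [x _ <- | out_t] /=.
  rewrite inE; case: (eqVneq (val x) a) => [->|_]; last by rewrite andbT orbC.
  by rewrite andbF /=; apply/negbTE/eqP; lia.
rewrite -leqNgt in out_t; have -> : (t == a.-1) = false by apply/negbTE/eqP; lia.
by rewrite andbF.
Qed.

Lemma prefix_card_shift_at A a t : 0 < a < n -> mem_nat A a -> ~~ mem_nat A a.-1 ->
  prefix_card (shift_at A a) t = prefix_card A t + (t == a).
Proof.
move=> lt_a Aa notAa'; elim: t => [|t IH].
  by rewrite !prefix_card0 eq_sym gtn_eqF //; case/andP: lt_a.
rewrite !prefix_cardS IH mem_nat_shift_at //.
have [->|neq_ta] := eqVneq t a; first by rewrite Aa (gtn_eqF (ltnSn a)) /= !addn0.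
have [eq_ta'|neq_ta'] := eqVneq t a.-1.
  have -> : t.+1 == a by apply/eqP; move: lt_a eq_ta'; lia.
  by rewrite eq_ta' (negbTE notAa') /= addn0 addn1.
have -> : (t.+1 == a) = false by apply/negbTE/eqP; move/eqP: neq_ta'; lia.
by rewrite /= !addn0.
Qed.

Lemma direct_left_shiftP A B : direct_left_shift A B ->
  exists a, [/\ 0 < a < n, mem_nat A a, ~~ mem_nat A a.-1 & B = shift_at A a].
Proof.
case/existsP => m /existsP [m' /and4P [/eqP Sm' Am notAm' /eqP ->]].
exists m; split; last by rewrite (shift_atE A Sm').
- by rewrite ltn_ord andbT -Sm'.
- by rewrite mem_nat_ord.
- by rewrite -Sm' mem_nat_ord.
Qed.

Lemma direct_left_shift_at A a : 0 < a < n -> mem_nat A a -> ~~ mem_nat A a.-1 ->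
  direct_left_shift A (shift_at A a).
Proof.
case/andP => a_gt0 lt_an Aa notAa'.
have lt_a'n : a.-1 < n by apply: leq_ltn_trans lt_an; exact: leq_pred.
apply/existsP; exists (Ordinal lt_an); apply/existsP; exists (Ordinal lt_a'n).
apply/and4P; split; rewrite -?mem_nat_ord //=; first by rewrite prednK.
by apply/eqP; apply: (@shift_atE A (Ordinal lt_an)); exact: prednK.
Qed.

Lemma direct_left_shift_dominated A B : direct_left_shift A B -> dominated A B.
Proof.
case/direct_left_shiftP => a [lt_a Aa notAa' ->] t.
by rewrite prefix_card_shift_at ?leq_addr.
Qed.

Lemma connect_dominated A B : connect (@direct_left_shift n) A B -> dominated A B.
Proof.
case/connectP => p; elim: p A => [|C p IH] A /=; first by move=> _ -> t.
case/andP => /direct_left_shift_dominated domAC /IH domCB /domCB {}domCB t.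
exact: leq_trans (domAC t) (domCB t).
Qed.

Lemma left_shift_connect A B : left_shift A B -> connect (@direct_left_shift n) A B.
Proof. by case/existsP => C /andP[/connect1 AC]; apply: connect_trans. Qed.

Lemma connect_left_shift A B :
  connect (@direct_left_shift n) A B -> (A == B) || left_shift A B.
Proof.
case/connectP => -[|C p] /=; first by move=> _ ->; rewrite eqxx.
case/andP => AC pC eB; apply/orP; right; apply/existsP; exists C.
by rewrite AC; apply/connectP; exists p.
Qed.

Lemma first_deficit R T : dominated R T -> R != T ->
  exists q, ~~ mem_nat R q /\ prefix_card R q.+1 < prefix_card T q.+1.
Proof.
move=> domRT /prefix_card_neq neqRT; case: (ex_minnP neqRT) => -[|q].
  by rewrite !prefix_card0.
move=> neq_q min_q; have eq_q : prefix_card R q = prefix_card T q.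
  by apply/eqP/negPn/negP => /min_q; rewrite ltnn.
have lt_q : prefix_card R q.+1 < prefix_card T q.+1 by rewrite ltn_neqAle neq_q domRT.
exists q; split => //; move: lt_q; rewrite !prefix_cardS eq_q.
by case: (mem_nat R q); case: (mem_nat T q) => //=; lia.
Qed.

Lemma exists_shift_position R T :
  dominated R T -> R != T -> prefix_card T n <= prefix_card R n ->
  exists m, [/\ 0 < m < n, mem_nat R m, ~~ mem_nat R m.-1 &
    prefix_card R m < prefix_card T m].
Proof.
move=> domRT neqRT totTR; have [q [notRq lt_q]] := first_deficit domRT neqRT.
have : exists x, (q < x) && mem_nat R x.
  have : prefix_card R q.+1 < prefix_card R n.
    exact: leq_trans lt_q (leq_trans (leq_prefix_card_total _ _) totTR).
  by case/prefix_card_gap => x /andP[lt_qx _] Rx; exists x; rewrite lt_qx.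
case/ex_minnP => m /andP[lt_qm Rm] min_m.
have lt_mn : m < n by apply: contraTT Rm; rewrite -leqNgt => /mem_nat_out ->.
have notR x : q < x < m -> ~~ mem_nat R x.
  case/andP => lt_qx lt_xm; apply/negP => Rx.
  by have := min_m x; rewrite lt_qx Rx leqNgt lt_xm => /(_ isT).
have notRm' : ~~ mem_nat R m.-1.
  have [-> //|neq_mq] := eqVneq m q.+1.
  by apply: notR; apply/andP; split; move/eqP: neq_mq; lia.
have flat : prefix_card R m = prefix_card R q.+1.
  by apply: prefix_card_flat => // x; apply: notR.
exists m; split => //; first by apply/andP; split; lia.
by rewrite flat (leq_trans lt_q) ?leq_prefix_card.
Qed.

Lemma dominated_step R T :
  dominated R T -> R != T -> prefix_card T n <= prefix_card R n ->
  exists R', [/\ direct_left_shift R R', dominated R' T,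
    prefix_card T n <= prefix_card R' n &
    \sum_(t < n.+1) prefix_card R t < \sum_(t < n.+1) prefix_card R' t].
Proof.
move=> domRT neqRT totTR.
have [m [lt_m Rm notRm' lt_mT]] := exists_shift_position domRT neqRT totTR.
have cardR' t : prefix_card (shift_at R m) t = prefix_card R t + (t == m).
  exact: prefix_card_shift_at.
exists (shift_at R m); split.
- exact: direct_left_shift_at.
- by move=> t; rewrite cardR'; case: eqP => [->|_]; rewrite ?addn1 ?addn0.
- by rewrite cardR' (leq_trans totTR) ?leq_addr.
- rewrite [X in _ < X](eq_bigr _ (fun (t : 'I_n.+1) _ => cardR' t)) big_split /=.
  have le_mn : m <= n by case/andP: lt_m => _ /ltnW.
  by rewrite -big_mkcond /= (big_ord1_eq _ (fun=> 1)) (ltnS m n) le_mn addn1.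
Qed.

Lemma dominated_connect A T : dominated A T -> prefix_card T n <= prefix_card A n ->
  connect (@direct_left_shift n) A T.
Proof.
have [d] := ubnP (\sum_(t < n.+1) prefix_card T t - \sum_(t < n.+1) prefix_card A t).
elim: d A => // d IH A lt_d domAT totTA.
have [-> | neqAT] := eqVneq A T; first exact: connect0.
have [A' [AA' domA'T totTA' lt_sum]] := dominated_step domAT neqAT totTA.
apply: connect_trans (connect1 AA') (IH A' _ domA'T totTA').
have : \sum_(t < n.+1) prefix_card A' t <= \sum_(t < n.+1) prefix_card T t.
  by apply: leq_sum => t _.
lia.
Qed.

Lemma prefix_card_truncate A N t :
  prefix_card [set x in A | prefix_card A x < N] t = minn (prefix_card A t) N.
Proof.
elim: t => [|t IH]; first by rewrite !prefix_card0 min0n.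
rewrite !prefix_cardS IH; have -> : mem_nat [set x in A | prefix_card A x < N] t =
    mem_nat A t && (prefix_card A t < N).
  by rewrite /mem_nat; case: insubP => [x _ <-|] //; rewrite inE.
case: (mem_nat A t); case: ltnP => /=; lia.
Qed.

End PrefixCard.

Lemma winningP i (S : {set 'I_(4 * i)}) :
  winning S <-> exists2 k, k < 2 ^ i & dominated (roof i k) S.
Proof.
split.
  case/existsP => k /existsP [T /andP [roofT sTS]]; exists k => // t.
  apply: leq_trans (subset_prefix_card t sTS).
  by case/orP: roofT => [/eqP -> // | /left_shift_connect/connect_dominated]; apply.
case=> k lt_k domS; set N := prefix_card (roof i k) (4 * i).
apply/existsP; exists (Ordinal lt_k); apply/existsP.
exists [set x in S | prefix_card S x < N].
apply/andP; split; last by apply/subsetP => x; rewrite inE => /andP[].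
rewrite eq_sym; apply: connect_left_shift; apply: dominated_connect => [t|];
  rewrite prefix_card_truncate; last exact: geq_minr.
by rewrite leq_min domS leq_prefix_card_total.
Qed.

Lemma mem_nat_roof i k j r : j < i -> r < 4 ->
  mem_nat (roof i k) (4 * j + r) = (r \in if bitj i k j then [:: 0; 3] else [:: 1; 2]).
Proof.
move=> lt_ji lt_r4; rewrite /mem_nat; case: insubP => [x _ val_x | ]; last by lia.
apply/bigcupP/idP => [[[j0 lt_j0i] _] | r_in].
  rewrite /block inE val_x /= => x_in; have eq_j : j0 = j.
    by move: x_in; case: bitj; rewrite !inE => /orP[] /eqP; lia.
  move: x_in; rewrite eq_j; case: bitj; rewrite !inE => /orP[] /eqP x_eq;
    apply/orP; [left | right | left | right]; apply/eqP; lia.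
exists (Ordinal lt_ji) => //; rewrite /block inE val_x /=.
by move: r_in; case: bitj; rewrite !inE => /orP[] /eqP ->; rewrite ?addn0 eqxx ?orbT.
Qed.

Lemma prefix_card_roof_step i k j : j < i ->
  let c := prefix_card (roof i k) in
  [/\ c (4 * j + 1) = c (4 * j) + bitj i k j, c (4 * j + 2) = c (4 * j) + 1,
      c (4 * j + 3) = c (4 * j) + 1 + ~~ bitj i k j & c (4 * j.+1) = c (4 * j) + 2].
Proof.
move=> lt_ji c; have step r : r < 4 ->
    c (4 * j + r.+1) = c (4 * j + r) + (r \in if bitj i k j then [:: 0; 3] else [:: 1; 2]).
  by move=> lt_r4; rewrite /c addnS prefix_cardS mem_nat_roof.
have := step 0 isT; have := step 1 isT; have := step 2 isT; have := step 3 isT.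
rewrite addn0 (_ : 4 * j + 4 = 4 * j.+1); last by lia.
by case: (bitj i k j); rewrite !inE /= => e4 e3 e2 e1; split; lia.
Qed.

Lemma prefix_card_roof i k j : j <= i -> prefix_card (roof i k) (4 * j) = 2 * j.
Proof.
elim: j => [|j IH] le_ji; first by rewrite muln0 prefix_card0.
by case: (prefix_card_roof_step k le_ji) => _ _ _ ->; rewrite IH 1?ltnW //; lia.
Qed.

Lemma exists_bitj i (b : nat -> bool) :
  exists2 k, k < 2 ^ i & forall j, j < i -> bitj i k j = b j.
Proof.
elim: i => [|i [k lt_k bits_k]]; first by exists 0.
exists (k.*2 + b i) => [|j lt_ji]; first by rewrite expnS; case: (b i); lia.
rewrite /bitj; have [lt_ji' | ->] : j < i \/ j = i by lia.
  rewrite subSS -(subnSK lt_ji') expnS divnMA.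
  have -> : (k.*2 + b i) %/ 2 = k by case: (b i); lia.
  exact: bits_k.
by rewrite subnn expn0 divn1 oddD odd_double; case: (b i).
Qed.

(* The counts of [A] on block [j] dominate those of any roof whose [j]-th bit
   is [b], provided they do at the block start [4 j]. *)
Definition block_ok n (A : {set 'I_n}) j (b : bool) : bool :=
  let c := prefix_card A in
  if b then (2 * j + 1 <= c (4 * j + 1)) && (2 * j + 1 <= c (4 * j + 3))
  else (2 * j + 1 <= c (4 * j + 2)) && (2 * j + 2 <= c (4 * j + 3)).

Section Ceiling.
Variables (i : nat) (S : {set 'I_(4 * i)}).

Lemma ceiling_shift_dominated S' : ceiling S -> direct_left_shift S S' ->
  exists a, S' = shift_at S a /\ exists2 k, k < 2 ^ i &
    forall t, prefix_card (roof i k) t <= prefix_card S t + (t == a).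
Proof.
case/andP => _ /forallP ceilS shiftS'.
have /winningP [k lt_k domS'] : winning S'.
  by apply: (implyP (ceilS S')); apply/existsP; exists S'; rewrite shiftS' connect0.
have [a [lt_a Sa notSa' eqS']] := direct_left_shiftP shiftS'.
exists a; split => //; exists k => // t.
by rewrite -prefix_card_shift_at // -eqS'.
Qed.

Section ShiftPosition.
Variables (k a : nat).
Hypothesis dom_a : forall t, prefix_card (roof i k) t <= prefix_card S t + (t == a).

Lemma boundary_deficit_shift j : j <= i -> prefix_card S (4 * j) < 2 * j -> a = 4 * j.
Proof.
move=> le_ji lt_S; have := dom_a (4 * j); rewrite prefix_card_roof //.
by case: eqP => [-> // | _]; rewrite addn0 leqNgt lt_S.
Qed.

Lemma block_deficit_shift j : j < i -> ~~ block_ok S j false -> ~~ block_ok S j true ->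
  a = 4 * j + 1 \/ a = 4 * j + 3.
Proof.
move=> lt_ji not_ok0 not_ok1; have [c1 c2 c3 _] := prefix_card_roof_step k lt_ji.
have c0 := prefix_card_roof k (ltnW lt_ji).
have lip : prefix_card S (4 * j + 3) <= (prefix_card S (4 * j + 2)).+1.
  by move: (prefix_cardS_le S (4 * j + 2)); rewrite -addnS.
have [-> | ne1] := eqVneq a (4 * j + 1); first by left.
have [-> | ne3] := eqVneq a (4 * j + 3); first by right.
have := dom_a (4 * j + 1); have := dom_a (4 * j + 2); have := dom_a (4 * j + 3).
move: not_ok0 not_ok1; rewrite /block_ok c1 c2 c3 c0.
by case: (bitj i k j) => /=; lia.
Qed.

End ShiftPosition.

Lemma blocks_ok_dominated k : (forall j, j <= i -> 2 * j <= prefix_card S (4 * j)) ->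
  (forall j, j < i -> block_ok S j (bitj i k j)) -> dominated (roof i k) S.
Proof.
move=> boundary blocks t; case: (leqP (4 * i) t) => [le_t | lt_t].
  rewrite prefix_card_out // prefix_card_roof //.
  exact: leq_trans (boundary i (leqnn i)) (leq_prefix_card _ le_t).
have lt_j : t %/ 4 < i by lia.
have lt_r : t %% 4 < 4 by rewrite ltn_pmod.
rewrite (divn_eq t 4) [_ * 4]mulnC; move: (t %/ 4) (t %% 4) lt_j lt_r => j r lt_ji lt_r4.
have [c1 c2 c3 _] := prefix_card_roof_step k lt_ji.
have c0 := prefix_card_roof k (ltnW lt_ji).
have := boundary j (ltnW lt_ji); have := blocks j lt_ji; rewrite /block_ok.
have mono u v : u <= v -> prefix_card S (4 * j + u) <= prefix_card S (4 * j + v).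
  by move=> le_uv; rewrite leq_prefix_card ?leq_add2l.
have := mono 0 1 isT; have := mono 1 2 isT; have := mono 2 3 isT.
case: r lt_r4 => [|[|[|[|r]]]] // _; rewrite ?addn0 ?c1 ?c2 ?c3 c0;
  by case: (bitj i k j) => /=; lia.
Qed.

End Ceiling.

Lemma card_set_le2 (T : finType) (P : pred T) x y :
  (forall z, P z -> z = x \/ z = y) -> #|[set z | P z]| <= 2.
Proof.
move=> Pxy; apply: leq_trans (_ : #|[set x; y]| <= 2).
  apply/subset_leq_card/subsetP => z; rewrite inE => /Pxy[->|->];
    by rewrite !inE eqxx ?orbT.
by rewrite cards2 ltnS leq_b1.
Qed.

Theorem lemma3 (i : nat) (hi : 1 <= i) (S : {set 'I_(4 * i)}) :
  ceiling S -> #|[set S' | direct_left_shift S S']| <= 2.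
Proof.
move=> ceilS; suff [a [b shifts_ab]] : exists a b, forall S',
    direct_left_shift S S' -> S' = shift_at S a \/ S' = shift_at S b.
  exact: card_set_le2 shifts_ab.
have shift_dom S' := @ceiling_shift_dominated i S S' ceilS.
case: (boolP [exists j : 'I_i.+1, prefix_card S (4 * j) < 2 * j]) =>
    [/existsP [j lt_S] | /existsPn boundary].
  exists (4 * j), (4 * j) => S' /shift_dom [a [-> [k _ dom_a]]]; left.
  by rewrite (boundary_deficit_shift dom_a (ltn_ord j) lt_S).
case: (boolP [exists j : 'I_i, ~~ block_ok S j false && ~~ block_ok S j true]) =>
    [/existsP [j /andP [not_ok0 not_ok1]] | /existsPn blocks].
  exists (4 * j + 1), (4 * j + 3) => S' /shift_dom [a [-> [k _ dom_a]]].
  by case: (block_deficit_shift dom_a (ltn_ord j) not_ok0 not_ok1) => ->; [left | right].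
have [k lt_k bits_k] := exists_bitj i (block_ok S ^~ true).
case/andP: ceilS => /andP [/negP losing _] _; case: losing; apply/winningP.
exists k => //; apply: blocks_ok_dominated => [j le_ji | j lt_ji].
  by move: (boundary (Ordinal (le_ji : j < i.+1))); rewrite -leqNgt.
rewrite bits_k //; case: (boolP (block_ok S j true)) => // not_ok1.
by move: (blocks (Ordinal lt_ji)); rewrite not_ok1 andbT negbK.
Qed.
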